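(* Let $H=([n],E)$ be a hypergraph having at least one edge of cardinality greater than $2$, and assume $H$ has two disjoint edges. Then $\Delta_H$ is not Cohen–Macaulay over any field.
   Context: A hypergraph $H=([n],E)$ has vertex set $[n]$ and edge set $E$, a collection of nonempty subsets of $[n]$; standing assumptions: every vertex lies in some edge, no edge has cardinality 1, no edge is properly contained in another. The coloring complex $\Delta_H$ is the abstract simplicial complex whose vertices are the nonempty proper subsets of $[n]$ and whose faces are the chains $\emptyset\neq A_1\subsetneq\cdots\subsetneq A_l\neq[n]$ ($l\ge0$) such that, with $A_0=\emptyset$, $A_{l+1}=[n]$, some difference $A_i\setminus A_{i-1}$ ($1\le i\le l+1$) contains an edge of $H$. *)

From HB Require Import structures.
From mathcomp Require Import all_boot all_order all_algebra.
Set Implicit Arguments. Unset Strict Implicit. Unset Printing Implicit Defensive.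
Import GRing.Theory.
Local Open Scope ring_scope.

Definition hypergraph (n : nat) (E : {set {set 'I_n}}) : Prop :=
  (forall e, e \in E -> e != set0) /\
  (forall v : 'I_n, exists2 e, e \in E & v \in e) /\
  (forall e, e \in E -> #|e| != 1%N) /\
  (forall e f, e \in E -> f \in E -> ~~ (e \proper f)).

(* Vertices: nonempty proper subsets of [n]; a face is a chain
   A_1 < ... < A_l (a set of pairwise comparable such subsets) such that,
   with A_0 = empty, A_{l+1} = [n], some consecutive difference
   A_i \ A_{i-1} contains an edge.  "Consecutive" = B proper-below C in
   F + {empty,[n]} with no element of F strictly between them. *)
Definition coloring_face (n : nat) (E : {set {set 'I_n}})
    (F : {set {set 'I_n}}) : bool :=
  [forall A in F, (A != set0) && (A != setT)] &&
  [forall A in F, forall B in F, (A \subset B) || (B \subset A)] &&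
  [exists B in set0 |: (setT |: F), exists C in set0 |: (setT |: F),
     [&& B \proper C,
         [forall A in F, ~~ ((B \proper A) && (A \proper C))] &
         [exists e in E, e \subset C :\: B]]].

(* Faces are indexed by cardinality k
   (dimension k-1); the empty face gives the augmentation (reduced homology). *)
Section Homology.
Variables (K : fieldType) (V : finType).

Definition faces_of (D : pred {set V}) (k : nat) : {set {set V}} :=
  [set F | D F & #|F| == k].

(* Oriented boundary matrix from faces of size k.+1 to faces of size k,
   (row-vector convention), orientation given by enum_rank on V. *)
Definition bdry (D : pred {set V}) (k : nat) :
    'M[K]_(#|faces_of D k.+1|, #|faces_of D k|) :=
  \matrix_(i < #|faces_of D k.+1|, j < #|faces_of D k|)
    let G : {set V} := enum_val i in let F : {set V} := enum_val j in
    if F \subset G then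
      \sum_(x in G :\: F)
        (-1) ^+ #|[set y in G | (enum_rank y < enum_rank x)%N]|
    else 0.

Definition rank_out (D : pred {set V}) (k : nat) : nat :=
  if k is k'.+1 then \rank (bdry D k') else 0%N.

(* dimension over K of the reduced homology group in dimension k-1 *)
Definition rbetti (D : pred {set V}) (k : nat) : nat :=
  (#|faces_of D k| - rank_out D k - \rank (bdry D k))%N.

Definition link (D : pred {set V}) (F : {set V}) : pred {set V} :=
  fun G => [disjoint F & G] && D (F :|: G).

(* 1 + dimension: the maximal cardinality of a face *)
Definition maxsize (D : pred {set V}) : nat := \max_(G | D G) #|G|.

(* Cohen-Macaulay over K, via Reisner's criterion: for every face F,
   reduced homology of lk F vanishes in dimensions < dim lk F. *)
Definition cohen_macaulay (D : pred {set V}) : Prop :=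
  forall F, D F -> forall k, (k < maxsize (link D F))%N ->
    rbetti (link D F) k = 0%N.
End Homology.

From mathcomp Require Import all_boot all_order all_algebra zify.
Set Implicit Arguments. Unset Strict Implicit. Unset Printing Implicit Defensive.

(* By Reisner's criterion it suffices to exhibit a face whose link has an edge
   but is disconnected, since a disconnected complex has nonzero reduced H_0.
   A family of subsets is a face of the coloring complex iff it is a chain and
   some edge is cut by none of its members (contained in or disjoint from each).
   For R a proper subset of [n], take the maximal chain from R up to [n]: a face
   containing it adds only proper subsets of R, and its uncut edge lies inside R.
   - If e, f are disjoint edges with |e| > 2, let R = e U f and add e to the
     chain: in the link no edge joins a subset of e to a superset of e.
   - Otherwise an edge g with |g| > 2 meets a two-element edge {a, b} in a only;
     with R = g U {b}, the vertex {b} of the link is isolated, while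
     {a, b} < {a, b, y} is an edge of the link. *)

Definition down_closed (V : finType) (D : pred {set V}) :=
  forall F G : {set V}, F \subset G -> D G -> D F.

Definition nested (T : finType) (F : {set {set T}}) :=
  forall A B, A \in F -> B \in F -> (A \subset B) || (B \subset A).

Definition uncut (T : finType) (e A : {set T}) := (e \subset A) || [disjoint e & A].

Section SetChains.
Variable T : finType.
Implicit Types (s : seq {set T}) (F G : {set {set T}}).

Lemma sub_nested F G : {subset G <= F} -> nested F -> nested G.
Proof. by move=> sGF nF A B /sGF FA /sGF; exact: nF. Qed.

Lemma nested_sorted s : sorted [rel A B : {set T} | A \subset B] s -> nested [set X in s].
Proof.
have subT : transitive [rel A B : {set T} | A \subset B] by move=> B A C; apply: subset_trans.
move=> ss A B; rewrite !inE => As Bs.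
have le_index := sorted_leq_index subT (fun X : {set T} => subxx X) ss.
by case: (leqP (index A s) (index B s)) => [|/ltnW] le; apply/orP; [left|right]; exact: le_index.
Qed.

Lemma sorted_proper_between s (A B : {set T}) :
  sorted [rel X Y : {set T} | X \proper Y] (A :: rcons s B) ->
  (forall X, X \in s -> A \proper X /\ X \proper B) /\ sorted [rel X Y : {set T} | X \proper Y] s.
Proof.
have propT : transitive [rel X Y : {set T} | X \proper Y] by move=> Y X Z; apply: proper_trans.
rewrite !(sorted_pairwise propT) pairwise_cons -cats1 pairwise_cat allrel1r.
case/andP=> /allP As /and3P[/allP sB ps _]; split => // X Xs.
by split; [apply: As; rewrite mem_cat Xs | exact: sB].
Qed.
End SetChains.

Section ReducedHomology.
Import GRing.Theory.
Variables (K : fieldType) (V : finType).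
Local Open Scope ring_scope.

Lemma link_down_closed (D : pred {set V}) (F : {set V}) : down_closed D -> down_closed (link D F).
Proof.
move=> closD G G' sGG' /andP[dFG' DFG']; apply/andP; split.
  exact: disjointWr dFG'.
by apply: closD DFG'; apply: setUS.
Qed.

Lemma card_set2_rank_lt (x y : V) : x != y ->
  #|[set t in [set x; y] | (enum_rank t < enum_rank y)%N]| =
  (enum_rank x < enum_rank y)%N.
Proof.
move=> nxy; have -> : [set t in [set x; y] | (enum_rank t < enum_rank y)%N] =
    if (enum_rank x < enum_rank y)%N then [set x] else set0.
  apply/setP => t; rewrite !inE; case: (eqVneq t x) => [->|ntx] /=.
    by case: ifP => _; rewrite ?inE ?eqxx.
  case: (eqVneq t y) => [->|_] /=; last by case: ifP; rewrite ?inE ?(negbTE ntx).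
  by rewrite ltnn; case: ifP; rewrite ?inE // eq_sym (negbTE nxy).
by case: ifP; rewrite ?cards1 ?cards0.
Qed.

Lemma set2D1l (x y : V) : x != y -> [set x; y] :\: [set x] = [set y].
Proof. by move=> nxy; rewrite setU1K // inE. Qed.

Lemma set2D1r (x y : V) : x != y -> [set x; y] :\ y = [set x].
Proof. by move=> nxy; rewrite setUC set2D1l 1?eq_sym. Qed.

Lemma bdry1_kernel (L : pred {set V}) (w : {set V} -> K) :
  down_closed L ->
  (forall x y, x != y -> L [set x; y] -> w [set x] = w [set y]) ->
  \row_j w (enum_val j) *m (bdry K L 1)^T = 0.
Proof.
move=> closL wE; apply/rowP => i; rewrite !mxE.
have := enum_valP i; rewrite inE => /andP[LG /cards2P[x [y [nxy defG]]]].
rewrite defG in LG.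
have vertex_face z : z \in [set x; y] -> [set z] \in faces_of L 1.
  by move=> zG; rewrite inE cards1 eqxx andbT (closL _ _ _ LG) // sub1set.
have Fx := vertex_face x (set21 x y); have Fy := vertex_face y (set22 x y).
have nyx : [set y] != [set x] by rewrite eq_sym (inj_eq set1_inj).
under eq_bigr => j _ do rewrite !mxE.
rewrite -(big_enum_val (fun S => w S * (if S \subset enum_val i then
   \sum_(z in enum_val i :\: S)
     (-1) ^+ #|[set t in enum_val i | (enum_rank t < enum_rank z)%N]|
   else 0))) defG.
rewrite (bigD1 [set x]) //= (bigD1 [set y]) /=; last by rewrite Fy nyx.
rewrite [X in _ + (_ + X)]big1 ?addr0; last first.
  move=> S /andP[/andP[+ nzx] nzy]; rewrite inE => /andP[_ /cards1P[z defS]].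
  rewrite defS in nzx nzy *.
  rewrite sub1set !inE; case: (eqVneq z x) nzx => [->|_]; rewrite ?eqxx //=.
  by case: (eqVneq z y) nzy => [->|_]; rewrite ?eqxx // mulr0.
rewrite !sub1set !inE !eqxx orbT /= set2D1l // set2D1r // !big_set1.
rewrite card_set2_rank_lt // setUC card_set2_rank_lt 1?eq_sym //.
rewrite (wE _ _ nxy LG) -mulrDr; apply/eqP; rewrite mulf_eq0; apply/orP; right.
case: (ltngtP (enum_rank x) (enum_rank y)) => [||/val_inj/enum_rank_inj/eqP];
  by rewrite ?expr1 ?expr0 ?addrN ?addNr // (negbTE nxy).
Qed.

Lemma card_faces0_le1 (L : pred {set V}) : (#|faces_of L 0| <= 1)%N.
Proof.
rewrite -(cards1 (set0 : {set V})); apply/subset_leq_card/subsetP => S.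
by rewrite !inE => /andP[_ /eqP/cards0_eq ->].
Qed.

(* A vertex predicate constant along edges yields two independent 0-cycles
   (its indicator and the constant 1), while the augmentation has rank <= 1. *)
Lemma rbetti1_neq0 (L : pred {set V}) (P : pred V) (p q : V) :
  down_closed L ->
  (forall x y, x != y -> L [set x; y] -> P x = P y) ->
  L [set p] -> P p -> L [set q] -> ~~ P q -> rbetti K L 1 != 0%N.
Proof.
move=> closL PE Lp Pp Lq Pq.
have Fp : [set p] \in faces_of L 1 by rewrite inE Lp cards1.
have Fq : [set q] \in faces_of L 1 by rewrite inE Lq cards1.
pose indP (S : {set V}) : K := [exists x in S, P x]%:R.
have indP1 x : indP [set x] = (P x)%:R.
  congr (nat_of_bool _)%:R; apply/existsP/idP => [[z]|Px].
    by rewrite inE => /andP[/eqP->].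
  by exists x; rewrite inE eqxx.
pose u1 : 'rV[K]_#|faces_of L 1| := \row_j indP (enum_val j).
pose u2 : 'rV[K]_#|faces_of L 1| := \row_j 1.
have ker1 : (u1 <= kermx (bdry K L 1)^T)%MS.
  rewrite sub_kermx; apply/eqP/bdry1_kernel => // x y nxy Lxy.
  by rewrite !indP1 (PE _ _ nxy Lxy).
have ker2 : (u2 <= kermx (bdry K L 1)^T)%MS.
  by rewrite sub_kermx; apply/eqP/(@bdry1_kernel L (fun=> 1)).
pose jp := enum_rank_in Fp [set p]; pose jq := enum_rank_in Fp [set q].
have u1p : u1 0 jp = 1 by rewrite mxE /jp enum_rankK_in // indP1 Pp.
have u1q : u1 0 jq = 0 by rewrite mxE /jq enum_rankK_in // indP1 (negbTE Pq).
have rank_u1 : \rank u1 = 1%N.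
  rewrite rank_rV; apply/eqP; rewrite eqb1; apply/eqP => /rowP/(_ jp).
  by rewrite u1p mxE; apply/eqP/oner_neq0.
have u2_notin_u1 : ~~ (u2 <= u1)%MS.
  apply/negP => /sub_rVP[a] /rowP/(_ jq); rewrite [RHS]mxE u1q mulr0 mxE.
  exact/eqP/oner_neq0.
have rank_ker : (2 <= \rank (kermx (bdry K L 1)^T))%N.
  have lt_u1 : (u1 < u1 + u2)%MS.
    by rewrite ltmxEneq addsmxSl addsmx_sub submx_refl.
  have le_ker : (\rank (u1 + u2)%MS <= \rank (kermx (bdry K L 1)^T))%N.
    by apply: mxrankS; rewrite addsmx_sub ker1.
  by move: (rank_ltmx lt_u1) le_ker; rewrite rank_u1; apply: leq_trans.
have rank_out1 : (rank_out K L 1 <= 1)%N.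
  exact: leq_trans (rank_leq_col _) (card_faces0_le1 L).
move: rank_ker; rewrite mxrank_ker mxrank_tr /rbetti.
move: rank_out1 (rank_leq_col (bdry K L 1)); lia.
Qed.

Lemma not_cohen_macaulay_of_disconnected_link (D : pred {set V}) F
    (P : pred V) p q x y :
  down_closed D ->
  link D F [set p] -> P p -> link D F [set q] -> ~~ P q ->
  x != y -> link D F [set x; y] ->
  (forall x y, x != y -> link D F [set x; y] -> P x -> P y) ->
  ~ cohen_macaulay K D.
Proof.
move=> closD Lp Pp Lq Pq nxy Lxy PE CM.
have DF : D F by apply: closD (subsetUl F [set p]) _; case/andP: Lp.
have closL : down_closed (link D F) := link_down_closed closD.
have dim_link : (1 < maxsize (link D F))%N.
  by have := @leq_bigmax_cond _ (link D F) (fun G => #|G|) _ Lxy; rewrite cards2 nxy.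
apply/eqP: (CM F DF 1%N dim_link); apply: (rbetti1_neq0 closL _ Lp Pp Lq Pq).
move=> x' y' nxy' Lxy'; apply/idP/idP; apply: PE => //; first by rewrite eq_sym.
by rewrite setUC.
Qed.
End ReducedHomology.

Section ColoringFaces.
Variables (n : nat) (E : {set {set 'I_n}}).
Hypothesis edge_neq0 : forall e, e \in E -> e != set0.
Implicit Types (A B C e : {set 'I_n}) (F : {set {set 'I_n}}).

Lemma nested_ends F : nested F -> nested (set0 |: (setT |: F)).
Proof.
move=> nF A B; rewrite !inE => /or3P[/eqP->|/eqP->|AF]; first by rewrite sub0set.
  by rewrite subsetT orbT.
by case/or3P => [/eqP->|/eqP->|/(nF _ _ AF)]; rewrite ?sub0set ?subsetT ?orbT.
Qed.

Lemma uncut_of_gap F B C e : nested F ->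
  B \in set0 |: (setT |: F) -> C \in set0 |: (setT |: F) ->
  (forall A, A \in F -> ~~ ((B \proper A) && (A \proper C))) ->
  e \subset C :\: B -> forall A, A \in F -> uncut e A.
Proof.
move=> nF FB FC gap; rewrite subsetD => /andP[seC deB] A FA.
have FA' : A \in set0 |: (setT |: F) by rewrite !inE FA !orbT.
have [sAB|nsAB] := boolP (A \subset B); first by rewrite /uncut (disjointWr sAB deB) orbT.
have [sCA|nsCA] := boolP (C \subset A); first by rewrite /uncut (subset_trans seC sCA).
have pBA : B \proper A by rewrite properE nsAB andbT; case/orP: (nested_ends nF FB FA') nsAB => ->.
have pAC : A \proper C by rewrite properE nsCA andbT; case/orP: (nested_ends nF FA' FC) nsCA => ->.
by move: (gap A FA); rewrite pBA pAC.
Qed.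

(* The gap is between the largest member of the chain missing [e] and the
   smallest one containing it. *)
Lemma gap_of_uncut F e : nested F -> e != set0 -> (forall A, A \in F -> uncut e A) ->
  exists2 B, B \in set0 |: (setT |: F) & exists2 C, C \in set0 |: (setT |: F) &
    [/\ B \proper C, forall A, A \in F -> ~~ ((B \proper A) && (A \proper C))
      & e \subset C :\: B].
Proof.
move=> nF ne0 eF.
pose Bs := set0 |: [set A in F | [disjoint e & A]].
pose Cs := setT |: [set A in F | e \subset A].
have [B BsB maxB] := @arg_maxnP _ set0 (mem Bs) (fun A => #|A|) (setU11 _ _).
have [C CsC minC] := @arg_minnP _ setT (mem Cs) (fun A => #|A|) (setU11 _ _).
have {BsB}[FB deB] : B \in set0 |: (setT |: F) /\ [disjoint e & B].
  case/setU1P: BsB => [->|]; first by rewrite !inE eqxx -setI_eq0 setI0.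
  by rewrite inE => /andP[FA ->]; rewrite !inE FA !orbT.
have {CsC}[FC seC] : C \in set0 |: (setT |: F) /\ e \subset C.
  case/setU1P: CsC => [->|]; first by rewrite !inE eqxx subsetT orbT.
  by rewrite inE => /andP[FA ->]; rewrite !inE FA !orbT.
have nsCB : ~~ (C \subset B).
  apply: contraNN ne0 => sCB; rewrite -subset0 -(setIidPl (subset_trans seC sCB)).
  by rewrite -setI_eq0 in deB; rewrite (eqP deB).
exists B => //; exists C => //; split; last by rewrite subsetD seC.
- by rewrite properE nsCB andbT; case/orP: (nested_ends nF FB FC) nsCB => ->.
- move=> A FA; apply/negP => /andP[pBA pAC]; case/orP: (eF A FA) => [seA|deA].
    have := minC A; rewrite !inE FA seA orbT => /(_ isT)/leq_ltn_trans.
    by move/(_ _ (proper_card pAC)); rewrite ltnn.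
  have := maxB A; rewrite !inE FA deA orbT => /(_ isT)/leq_ltn_trans.
  by move/(_ _ (proper_card pBA)); rewrite ltnn.
Qed.

Lemma coloring_faceP F :
  reflect [/\ forall A, A \in F -> A != set0 /\ A != setT, nested F
             & exists2 e, e \in E & forall A, A \in F -> uncut e A]
          (coloring_face E F).
Proof.
apply: (iffP andP) => [[/andP[/forall_inP ends /forall_inP nF] gap]|[ends nF [e Ee eF]]].
  have nF' : nested F by move=> A B FA; move/forall_inP: (nF A FA); apply.
  split => // [A /ends/andP[]//|].
  case/exists_inP: gap => B FB /exists_inP[C FC /and3P[_ /forall_inP gap /exists_inP[e Ee seCB]]].
  by exists e => //; apply: (uncut_of_gap nF' FB FC).
split; first (apply/andP; split).
- by apply/forall_inP => A /ends[-> ->].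
- by apply/forall_inP => A FA; apply/forall_inP => B; exact: nF.
have [B FB [C FC [pBC gap seCB]]] := gap_of_uncut nF (edge_neq0 Ee) eF.
apply/exists_inP; exists B => //; apply/exists_inP; exists C => //.
by rewrite pBC; apply/and3P; split; [|apply/forall_inP|apply/exists_inP; exists e].
Qed.

Lemma coloring_face_down_closed : down_closed (coloring_face E).
Proof.
move=> F G sFG /coloring_faceP[ends nG [e Ee eG]]; apply/coloring_faceP; split.
- by move=> A /(subsetP sFG)/ends.
- by move=> A B /(subsetP sFG) GA /(subsetP sFG); exact: nG.
- by exists e => // A /(subsetP sFG)/eG.
Qed.
End ColoringFaces.

Section ChainAbove.
Variable n : nat.
Implicit Types (A R X h : {set 'I_n}).

Definition chain_above R : {set {set 'I_n}} :=
  [set R :|: [set x : 'I_n | x < k] | k : 'I_n] :\ setT.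

Lemma chain_aboveP R X :
  reflect (X != setT /\ exists k : 'I_n, X = R :|: [set x : 'I_n | x < k]) (X \in chain_above R).
Proof.
apply: (iffP setD1P) => -[nXT]; first by case/imsetP => k _ defX; split => //; exists k.
by case=> k defX; split => //; apply/imsetP; exists k.
Qed.

Lemma chain_above_sup R X : X \in chain_above R -> R \subset X.
Proof. by case/chain_aboveP => _ [k ->]; apply: subsetUl. Qed.

Lemma chain_above_neqT R X : X \in chain_above R -> X != setT.
Proof. by case/chain_aboveP. Qed.

Lemma initial_mono (j k : nat) : j <= k -> [set x : 'I_n | x < j] \subset [set x : 'I_n | x < k].
Proof. by move=> ljk; apply/subsetP => x; rewrite !inE => /leq_trans; apply. Qed.

Lemma chain_above_nested R : nested (chain_above R).
Proof.
move=> X Y; case/chain_aboveP => _ [j ->] /chain_aboveP[_ [k ->]].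
by case: (leqP j k) => [|/ltnW] /initial_mono le; rewrite (setUS R le) ?orbT.
Qed.

Lemma mem_chain_above R (k : 'I_n) :
  R :|: [set x : 'I_n | x < k] != setT -> R :|: [set x : 'I_n | x < k] \in chain_above R.
Proof. by move=> nT; apply/chain_aboveP; split => //; exists k. Qed.

Lemma chain_above_self R (z : 'I_n) : R != setT -> R \in chain_above R.
Proof.
move=> nRT; apply/chain_aboveP; split => //; exists (Ordinal (leq_ltn_trans (leq0n z) (ltn_ord z))).
by apply/setP => x; rewrite !inE ltn0 orbF.
Qed.

Lemma nested_chain_above_mem R A : R \subset A -> A != setT ->
  nested (A |: chain_above R) -> A \in chain_above R.
Proof.
move=> sRA nAT /(_ A) nA; have {}nA X : X \in chain_above R -> (A \subset X) || (X \subset A).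
  by move=> CX; apply: nA; [exact: setU11 | exact: setU1r].
have /subsetPn[z _ Az] : ~~ (setT \subset A) by rewrite subTset.
have [m Am minm] := @arg_minnP _ z (fun x => x \notin A) val Az.
suff defA : A = R :|: [set x : 'I_n | x < m] by rewrite defA mem_chain_above // -defA.
apply/eqP; rewrite eqEsubset subUset sRA /=; apply/andP; split; last first.
  apply/subsetP => x; rewrite inE; apply: contraLR; rewrite -leqNgt; exact: minm.
apply/subsetP => x Ax; rewrite !inE ltnNge; case: (boolP (x \in R)) => //= Rx.
apply/negP => lemx; have ltmx : m < x.
  by rewrite ltn_neqAle lemx andbT; apply: contraNneq Am => /val_inj ->.
have Xx : R :|: [set y : 'I_n | y < x] \in chain_above R.
  by apply: mem_chain_above; apply/negP => /eqP/setP/(_ x); rewrite !inE ltnn (negbTE Rx).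
case/orP: (nA _ Xx) => [/subsetP/(_ x Ax)|/subsetP/(_ m)]; first by rewrite !inE ltnn (negbTE Rx).
by rewrite !inE ltmx orbT => /(_ isT); apply/negP.
Qed.

Lemma nested_chain_above_proper R A : A != set0 -> A != setT -> A \notin chain_above R ->
  nested (A |: chain_above R) -> A \proper R.
Proof.
move=> /set0Pn[z Az] nAT nCA nA; have [->|nRT] := eqVneq R setT.
  by rewrite properT.
have [sRA|nsRA] := boolP (R \subset A).
  by move: nCA; rewrite (nested_chain_above_mem sRA nAT nA).
have CR := chain_above_self z nRT; rewrite properE nsRA andbT.
by case/orP: (nA A R (setU11 _ _) (setU1r _ CR)) nsRA => ->.
Qed.

Lemma uncut_chain_above_sub R h : 1 < #|h| ->
  (forall X, X \in chain_above R -> uncut h X) -> h \subset R.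
Proof.
move=> /card_gt1P[x [y [hx hy nxy]]] hC.
wlog ltxy : x y hx hy nxy / x < y.
  move=> W; case: (ltngtP x y) => [|ltyx|/val_inj exy]; first exact: W.
    by apply: (W y x) => //; rewrite eq_sym.
  by rewrite exy eqxx in nxy.
have [->|nRT] := eqVneq R setT; first exact: subsetT.
case/orP: (hC _ (chain_above_self x nRT)) => // dhR.
have Ry : y \notin R by rewrite (disjointFr dhR hy).
have Xy : R :|: [set t : 'I_n | t < y] \in chain_above R.
  by apply: mem_chain_above; apply/negP => /eqP/setP/(_ y); rewrite !inE ltnn (negbTE Ry).
case/orP: (hC _ Xy) => [/subsetP/(_ y hy)|/disjointFr/(_ hx)]; rewrite !inE.
  by rewrite ltnn (negbTE Ry).
by rewrite ltxy orbT.
Qed.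
End ChainAbove.

Section FacesAboveChain.
Variables (n : nat) (E : {set {set 'I_n}}).
Hypothesis card_edge : forall e, e \in E -> 1 < #|e|.
Implicit Types (A R X e h : {set 'I_n}) (s : seq {set 'I_n}).

Let edge_neq0 e : e \in E -> e != set0.
Proof. by move=> Ee; rewrite -card_gt0 ltnW ?card_edge. Qed.

Lemma in_seq_chain_above s R X :
  (X \in [set Y in s] :|: chain_above R) = (X \in s) || (X \in chain_above R).
Proof. by rewrite in_setU in_set. Qed.

(* [sorted] over [set0 :: rcons s R] says that [s] is a strictly increasing
   chain of nonempty proper subsets of [R]. *)
Lemma face_chain_above R e s : e \in E -> e \subset R ->
  sorted [rel X Y : {set 'I_n} | X \proper Y] (set0 :: rcons s R) -> all (uncut e) s ->
  coloring_face E ([set X in s] :|: chain_above R).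
Proof.
move=> Ee seR /sorted_proper_between[between ss] /allP es.
apply/(coloring_faceP edge_neq0); split.
- move=> X; rewrite in_seq_chain_above => /orP[/between[X0 XR]|CX].
    by rewrite -proper0 -properT X0 (proper_sub_trans XR (subsetT R)).
  split; last exact: chain_above_neqT CX.
  apply: contra_neq (edge_neq0 Ee) => X0; apply/eqP; rewrite -subset0 -X0.
  exact: subset_trans seR (chain_above_sup CX).
- move=> X Y; rewrite !in_seq_chain_above => /orP[Xs|CX] /orP[Ys|CY].
  + by apply: (nested_sorted (sub_sorted (fun _ _ => @proper_sub _ _ _) ss)); rewrite inE.
  + by rewrite (subset_trans (proper_sub (between X Xs).2) (chain_above_sup CY)).
  + by rewrite (subset_trans (proper_sub (between Y Ys).2) (chain_above_sup CX)) orbT.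
  + exact: chain_above_nested CX CY.
- exists e => // X; rewrite in_seq_chain_above => /orP[/es//|CX].
  by rewrite /uncut (subset_trans seR (chain_above_sup CX)).
Qed.

Lemma link_chain_above R e s0 s1 s (H : {set {set 'I_n}}) :
  e \in E -> e \subset R -> H =i s1 -> perm_eq (s0 ++ s1) s ->
  sorted [rel X Y : {set 'I_n} | X \proper Y] (set0 :: rcons s R) -> all (uncut e) s ->
  link (coloring_face E) ([set X in s0] :|: chain_above R) H.
Proof.
move=> Ee seR Hs01 s01 srt es; have [between ss] := sorted_proper_between srt.
have uniq01 : uniq (s0 ++ s1).
  rewrite (perm_uniq s01); apply: sorted_uniq ss => [Y X Z|X].
    exact: proper_trans.
  exact: properxx.
apply/andP; split.
  rewrite -setI_eq0; apply/eqP/setP => X; rewrite in_setI in_seq_chain_above Hs01 in_set0.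
  apply/negP => /andP[/orP[X0 X1|CX X1]].
    by move: uniq01; rewrite cat_uniq => /and3P[_ /hasPn/(_ X X1)]; rewrite X0.
  have /between[_ /proper_subn] : X \in s by rewrite -(perm_mem s01) mem_cat X1 orbT.
  by rewrite (chain_above_sup CX).
have -> : [set X in s0] :|: chain_above R :|: H = [set X in s] :|: chain_above R.
  apply/setP => X; rewrite in_setU !in_seq_chain_above Hs01 -(perm_mem s01) mem_cat.
  by rewrite orbAC.
exact: face_chain_above srt es.
Qed.

Lemma link_chain_aboveP R s0 (H : {set {set 'I_n}}) :
  link (coloring_face E) ([set X in s0] :|: chain_above R) H ->
  [/\ forall X, X \in H -> X \notin s0 /\ X \proper R,
      forall X, X \in [set X in s0] :|: H -> X != set0,
      nested ([set X in s0] :|: H)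
    & exists2 h, h \in E & h \subset R /\ forall X, X \in [set X in s0] :|: H -> uncut h X].
Proof.
case/andP=> dFH /(coloring_faceP edge_neq0)[ends nG [h Eh hG]].
have sub0 : {subset [set X in s0] :|: H <= [set X in s0] :|: chain_above R :|: H}.
  by move=> X; rewrite !in_setU => /orP[->|->]; rewrite ?orbT.
have subC : {subset chain_above R <= [set X in s0] :|: chain_above R :|: H}.
  by move=> X CX; rewrite in_setU in_seq_chain_above CX orbT.
split.
- move=> X HX; have := disjointFl dFH HX; rewrite in_seq_chain_above => /norP[X0 CX].
  have [Xn0 XnT] : X != set0 /\ X != setT by apply: ends; rewrite in_setU HX orbT.
  split => //.
  apply: nested_chain_above_proper Xn0 XnT CX (sub_nested _ nG) => Y.
  by rewrite in_setU1 => /orP[/eqP->|/subC//]; rewrite in_setU HX orbT.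
- by move=> X /sub0/ends[].
- exact: sub_nested nG.
- exists h => //; split; last by move=> X /sub0/hG.
  by apply: uncut_chain_above_sub (card_edge Eh) _ => X /subC/hG.
Qed.

Hypothesis edge_antichain : forall e f, e \in E -> f \in E -> e \subset f -> e = f.
Variable K : fieldType.

Lemma edge_not_sub1 e b : e \in E -> ~~ (e \subset [set b]).
Proof. by move=> Ee; apply/negP => /subset_leq_card; rewrite cards1 leqNgt card_edge. Qed.

Lemma edge_cut_between g S A h : g \in E -> h \in E ->
  h \subset g :|: S -> [disjoint h & S] ->
  S \subset A -> A \proper g :|: S -> ~~ (A \subset S) -> ~~ uncut h A.
Proof.
move=> Eg Eh shgS dhS sSA pA nsAS.
have -> : h = g.
  apply: edge_antichain => //; apply/subsetP => x hx.
  by move: (subsetP shgS x hx); rewrite in_setU (disjointFr dhS hx) orbF.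
rewrite /uncut negb_or; apply/andP; split.
  by apply/negP => sgA; move: (proper_subn pA); rewrite subUset sgA sSA.
apply: contra nsAS => dgA; apply/subsetP => x Ax.
by move: (subsetP (proper_sub pA) x Ax); rewrite in_setU (disjointFl dgA Ax).
Qed.

Lemma not_cohen_macaulay_edge_meets_pair g a b :
  g \in E -> 2 < #|g| -> a \in g -> b \notin g -> [set a; b] \in E ->
  ~ cohen_macaulay K (coloring_face E).
Proof.
move=> Eg g3 ag bg Eab; set e := [set a; b]; set R := g :|: [set b].
have [y [z [yg zg [nyz nya nza]]]] :
    exists y z, [/\ y \in g, z \in g & [/\ y != z, y != a & z != a]].
  have /card_gt1P[y [z [yg zg nyz]]] : 1 < #|g :\ a| by move: g3; rewrite (cardsD1 a) ag add1n ltnS.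
  by move: yg zg; rewrite !in_setD1 => /andP[nya yg] /andP[nza zg]; exists y, z.
have nb x : x \in g -> x != b by move=> xg; apply: contraNneq bg => <-.
have ye : y \notin e by rewrite !inE negb_or nya nb.
set r := y |: e.
have zr : z \notin r by rewrite !inE !negb_or eq_sym nyz nza nb.
have b_R : [set b] \proper R by apply: properUr; apply/subsetPn; exists a; rewrite // inE nb.
have yR : y \in R by rewrite inE yg.
have e_R : e \proper R.
  apply/properP; split; last by exists y.
  by rewrite subUset !sub1set !inE ag eqxx orbT.
have e_r : e \proper r by apply: properUr; rewrite sub1set.
have r_R : r \proper R.
  apply/properP; split; last by exists z; rewrite // inE zg.
  by rewrite subUset sub1set yR (proper_sub e_R).
have e_ne0 : set0 \proper e by rewrite proper0; apply/set0Pn; exists a; rewrite !inE eqxx.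
have b_ne0 : set0 \proper [set b] by rewrite proper0; apply/set0Pn; exists b; rewrite inE.
have lk_b : link (coloring_face E) ([set X in [::]] :|: chain_above R) [set [set b]].
  apply: (@link_chain_above R g [::] [:: [set b]] [:: [set b]]) => //.
  - exact: subsetUl.
  - by move=> X; rewrite !inE.
  - by rewrite /= b_ne0 b_R.
  - by rewrite /= /uncut disjoint_sym disjoints1 bg orbT.
have lk_e : link (coloring_face E) ([set X in [::]] :|: chain_above R) [set e].
  apply: (@link_chain_above R e [::] [:: e] [:: e]) => //.
  - exact: proper_sub e_R.
  - by move=> X; rewrite !inE.
  - by rewrite /= e_ne0 e_R.
  - by rewrite /= /uncut subxx.
have lk_er : link (coloring_face E) ([set X in [::]] :|: chain_above R) [set e; r].
  apply: (@link_chain_above R e [::] [:: e; r] [:: e; r]) => //.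
  - exact: proper_sub e_R.
  - by move=> X; rewrite !inE.
  - by rewrite /= e_ne0 e_r r_R.
  - by rewrite /= /uncut subxx (proper_sub e_r).
have ne_er : e != r by apply: contraNneq ye => ->; rewrite !inE eqxx.
have ne_eb : e != [set b].
  by apply: contraTneq (nb a ag) => eb; move: (set21 a b); rewrite -/e eb inE negbK.
(* [[set b]] is an isolated vertex of the link. *)
apply: (not_cohen_macaulay_of_disconnected_link (P := fun X => X == [set b])
         (coloring_face_down_closed edge_neq0)
         lk_b (eqxx [set b]) lk_e ne_eb ne_er lk_er) => A A' nAA' lk /eqP defA.
have [inH ne0 nest [h Eh [hR hs]]] := link_chain_aboveP lk.
have inG X : X \in [set A; A'] -> X \in [set X in [::]] :|: [set A; A'].
  by move=> XH; rewrite in_setU XH orbT.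
have A'_H : A' \in [set A; A'] := set22 A A'.
have nsA'b : ~~ (A' \subset [set b]).
  by rewrite subset1 negb_or -defA eq_sym nAA' ne0 // inG.
have sbA' : [set b] \subset A'.
  by case/orP: (nest A A' (inG _ (set21 A A')) (inG _ A'_H)); rewrite defA // (negbTE nsA'b).
have dhb : [disjoint h & [set b]].
  by case/orP: (hs A (inG _ (set21 A A'))); rewrite defA // (negbTE (edge_not_sub1 b Eh)).
case/negP: (edge_cut_between Eg Eh hR dhb sbA' (inH A' A'_H).2 nsA'b).
exact/hs/inG.
Qed.

Lemma not_cohen_macaulay_disjoint_edges e f :
  e \in E -> f \in E -> [disjoint e & f] -> 2 < #|e| ->
  ~ cohen_macaulay K (coloring_face E).
Proof.
move=> Ee Ef def e3; set R := f :|: e.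
have /card_gt1P[x [x' [xe x'e nxx']]] : 1 < #|e| by apply: ltnW.
have /card_gt1P[y [y' [yf y'f nyy']]] := card_edge Ef.
have ye : y \notin e by rewrite (disjointFl def yf).
have y'e : y' \notin e by rewrite (disjointFl def y'f).
set px := [set x]; set pxx := [set x; x']; set q := y |: e.
have pxx_e : pxx \subset e by rewrite subUset !sub1set xe x'e.
have px_e : px \subset e by rewrite sub1set.
have px0 : set0 \proper px by rewrite proper0; apply/set0Pn; exists x; rewrite inE.
have px_pxx : px \proper pxx by apply: properUl; rewrite sub1set inE eq_sym.
have pxx_e' : pxx \proper e by rewrite properEcard pxx_e cards2 nxx'.
have e_R : e \proper R by apply: properUr; apply/subsetPn; exists y.
have e_q : e \proper q by apply: properUr; rewrite sub1set.
have q_R : q \proper R.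
  apply/properP; split; first by rewrite subUset sub1set inE yf (proper_sub e_R).
  by exists y'; rewrite ?inE ?y'f // negb_or y'e eq_sym nyy'.
have uncut_f X : X \subset e -> uncut f X.
  by move=> sXe; rewrite /uncut (disjointWr sXe) 1?disjoint_sym ?orbT.
have fR : f \subset R := subsetUl f e.
have lk_x : link (coloring_face E) ([set X in [:: e]] :|: chain_above R) [set px].
  apply: (@link_chain_above R f [:: e] [:: px] [:: px; e]) => //.
  - by move=> X; rewrite !inE.
  - by rewrite perm_catC.
  - by rewrite /= px0 (proper_sub_trans px_pxx (proper_sub pxx_e')) e_R.
  - by rewrite /= !uncut_f.
have lk_q : link (coloring_face E) ([set X in [:: e]] :|: chain_above R) [set q].
  apply: (@link_chain_above R e [:: e] [:: q] [:: e; q]) => //.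
  - exact: proper_sub e_R.
  - by move=> X; rewrite !inE.
  - by rewrite /= proper0 edge_neq0 // e_q q_R.
  - by rewrite /= /uncut subxx (proper_sub e_q).
have lk_xx : link (coloring_face E) ([set X in [:: e]] :|: chain_above R) [set px; pxx].
  apply: (@link_chain_above R f [:: e] [:: px; pxx] [:: px; pxx; e]) => //.
  - by move=> X; rewrite !inE.
  - by rewrite perm_catC.
  - by rewrite /= px0 px_pxx pxx_e' e_R.
  - by rewrite /= !uncut_f.
have nq_e : ~~ (q \subset e) by apply: proper_subn.
have ne_px : px != pxx by apply: contraTneq px_pxx => ->; rewrite properxx.
(* No edge of the link joins a subset of [e] to a set not contained in [e]. *)
apply: (not_cohen_macaulay_of_disconnected_link (P := fun X => X \subset e)
         (coloring_face_down_closed edge_neq0) lk_x px_e lk_q nq_e ne_px lk_xx).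
move=> A A' nAA' lk sAe; apply: contraT => nsA'e.
have [inH ne0 nest [h Eh [hR hs]]] := link_chain_aboveP lk.
have inG X : X \in [set A; A'] -> X \in [set X in [:: e]] :|: [set A; A'].
  by move=> XH; rewrite in_setU XH orbT.
have eG : e \in [set X in [:: e]] :|: [set A; A'] by rewrite in_setU !inE eqxx.
have A_H : A \in [set A; A'] := set21 A A'.
have A'_H : A' \in [set A; A'] := set22 A A'.
have nAe : A != e by have [] := inH A A_H; rewrite inE.
have seA' : e \subset A'.
  by case/orP: (nest A' e (inG _ A'_H) eG) => //; rewrite (negbTE nsA'e).
have dhA : [disjoint h & A].
  case/orP: (hs A (inG _ A_H)) => // shA; case/negP: nAe.
  by rewrite eqEsubset sAe -(edge_antichain Eh Ee (subset_trans shA sAe)).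
have dhe : [disjoint h & e].
  case/orP: (hs e eG) => // /(edge_antichain Eh Ee) he; rewrite he in dhA.
  case/set0Pn: (ne0 A (inG _ A_H)) => z Az.
  by move: (disjointFr dhA (subsetP sAe z Az)); rewrite Az.
case/negP: (edge_cut_between Ef Eh hR dhe seA' (inH A' A'_H).2 nsA'e).
exact/hs/inG.
Qed.

End FacesAboveChain.

Theorem mainTheorem3 (n : nat) (E : {set {set 'I_n}}) :
  hypergraph E ->
  (exists2 e, e \in E & 2 < #|e|) ->
  (exists e, exists f, [/\ e \in E, f \in E & [disjoint e & f]]) ->
  forall K : fieldType, ~ cohen_macaulay K (coloring_face E).
Proof.
move=> [neq0 [_ [card1 antichain]]] [g Eg g3] [e [f [Ee Ef def]]] K.
have card_edge h : h \in E -> 1 < #|h|.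
  by move=> Eh; move: (neq0 h Eh) (card1 h Eh); rewrite -card_gt0; case: #|h| => [|[|]].
have edge_antichain h h' : h \in E -> h' \in E -> h \subset h' -> h = h'.
  by move=> Eh Eh' shh'; apply/eqP; rewrite eqEproper shh' antichain.
have [e3|e_le2] := ltnP 2 #|e|.
  exact: (not_cohen_macaulay_disjoint_edges card_edge edge_antichain Ee Ef def e3).
have [dge|] := boolP [disjoint g & e].
  exact: (not_cohen_macaulay_disjoint_edges card_edge edge_antichain Eg Ee dge g3).
rewrite -setI_eq0 => /set0Pn[a]; rewrite inE => /andP[ag ae].
have /subsetPn[b eb bg] : ~~ (e \subset g).
  by apply: contraTN g3 => /(edge_antichain _ _ Ee Eg) <-; rewrite -leqNgt.
have defe : e = [set a; b].
  apply/eqP; rewrite eq_sym eqEcard subUset !sub1set ae eb cards2 (leq_trans e_le2) //.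
  by rewrite ltnS lt0b; apply: contraNneq bg => <-.
rewrite defe in Ee.
exact: (not_cohen_macaulay_edge_meets_pair card_edge edge_antichain Eg g3 ag bg Ee).
Qed.
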